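(* For every positive integer $n$, as formal power series in $x$, $$\frac{\mathrm{ODP}(\mathrm{Tour}_n,\mathrm{Cycle}_n)}{(1-x)^n}=n\sum_{m=0}^{\infty}m^{n-1}x^m,$$ with the convention $0^0=1$.
   Context: $\mathrm{Tour}_n$ is the directed graph on $[n]$ with edges $i\to j$ for all $n\ge i>j\ge1$. For $n\ge2$, $\mathrm{Cycle}_n$ is the directed multigraph on $[n]$ with edges $i\to i+1$ ($1\le i\le n-1$) and $n\to1$; for $n=2$ its edges are $1\to2$ and $2\to1$. $\mathrm{Cycle}_1$ is a single vertex (loops are irrelevant). For directed graphs $X,Y$ with $|V(X)|=|V(Y)|$, $\mathrm{DFS}(X,Y)$ has as vertices the bijections $\sigma:V(X)\to V(Y)$. For each $\sigma$ and ordered pair $(a,b)$ of distinct vertices, it has $m_X(a,b)m_Y(\sigma(a),\sigma(b))$ edges from $\sigma$ to $\sigma\circ(a\,b)$, where $m_X(a,b)$ is the number of edges $a\to b$ in $X$. Thus $\mathrm{outdeg}(\sigma)=\sum_{a\ne b}m_X(a,b)m_Y(\sigma(a),\sigma(b))$ and $\mathrm{ODP}(X,Y)=\sum_\sigma x^{\mathrm{outdeg}(\sigma)}$. *)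

From HB Require Import structures.
From mathcomp Require Import all_boot all_order all_algebra all_fingroup.
Set Implicit Arguments. Unset Strict Implicit. Unset Printing Implicit Defensive.
Import GRing.Theory.
Local Open Scope ring_scope.

(* Directed multigraphs on the vertex set 'I_n (vertex i : 'I_n stands for
   the label i+1 in [n]), given by their edge-multiplicity function:
   mult a b = number of edges a -> b. *)
Definition dmgraph (n : nat) := 'I_n -> 'I_n -> nat.

Definition Tour (n : nat) : dmgraph n := fun a b => (b < a)%N : nat.

(* For n = 2 this gives 1->2 and 2->1; for n = 1 the only
   "edge" is a loop, which is irrelevant (only pairs a <> b are counted). *)
Definition Cycle (n : nat) : dmgraph n :=
  fun a b => (val b == (val a).+1 %% n)%N : nat.

(* Out-degree of sigma in DFS(X,Y): sum over ordered pairs a <> b of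
   m_X(a,b) * m_Y(sigma a, sigma b). *)
Definition dfs_outdeg (n : nat) (X Y : dmgraph n) (s : 'S_n) : nat :=
  (\sum_(a : 'I_n) \sum_(b : 'I_n | a != b) X a b * Y (s a) (s b))%N.

Definition ODP (n : nat) (X Y : dmgraph n) : {poly int} :=
  \sum_(s : 'S_n) 'X^(dfs_outdeg X Y s).

Arguments Tour n : clear implicits.
Arguments Cycle n : clear implicits.

From mathcomp Require Import all_boot all_order all_algebra all_fingroup.
From mathcomp Require Import zify ring.
From Stdlib Require Import FunctionalExtensionality.
Set Implicit Arguments. Unset Strict Implicit. Unset Printing Implicit Defensive.
Import GRing.Theory.

(* Read through s^-1, the out-degree of s in DFS(Tour_n, Cycle_n) is the number
   of cyclic descents of the word s(1)...s(n), and dividing by (1 - x)^n turns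
   x^d into the sequence m |-> 'C(m - d + n - 1, n - 1).  The theorem is thus
   the cyclic Worpitzky identity
     \sum_s 'C(m - cdes s + n - 1, n - 1) = n * m^(n-1).
   Rotating the letter 0 to the front, every permutation of n - 1 letters with
   d descents yields n cyclic words with d + 1 cyclic descents; this reduces the
   identity to Worpitzky's \sum_t 'C(m - des t + N, N) = (m + 1)^N, which
   follows by induction on N by inserting the largest letter into each of the
   N + 1 gaps of t. *)

Lemma uniq_min_size_perm (T : eqType) (s1 s2 : seq T) :
  uniq s1 -> {subset s1 <= s2} -> (size s2 <= size s1)%N -> perm_eq s1 s2.
Proof.
move=> s1U s12 le21; have [eq_size eq_mem] := uniq_min_size s1U s12 le21.
by apply: uniq_perm; rewrite -?(eq_uniq eq_size eq_mem).
Qed.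

Lemma iotaS_rcons N : iota 0 N.+1 = rcons (iota 0 N) N.
Proof. by rewrite -addn1 iotaD add0n cats1. Qed.

Lemma sum_ord_recl (R : nmodType) (F : nat -> R) n :
  (\sum_(j < n.+1) F j = F 0%N + \sum_(j < n) F j.+1)%R.
Proof. by rewrite big_ord_recl; congr (_ + _)%R; apply: eq_bigr => i _; rewrite lift0. Qed.

Fixpoint descents (s : seq nat) : nat :=
  if s is x :: ((y :: _) as r) then ((y < x) + descents r)%N else 0%N.

Definition insert_at (j M : nat) (t : seq nat) := take j t ++ M :: drop j t.

Lemma insert_at0 M t : insert_at 0 M t = M :: t.
Proof. by rewrite /insert_at take0 drop0. Qed.

Local Open Scope ring_scope.

Lemma descents_cons2 x y r : descents [:: x, y & r] = ((y < x) + descents (y :: r))%N.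
Proof. by []. Qed.

(* Inserting a new maximum M into the gap between two entries of [t] creates a
   descent unless that gap already was one; inserting it at the end never does. *)
Lemma sum_descents_insert_max (f : nat -> int) (M : nat) (t : seq nat) :
  all (fun y => y < M)%N t ->
  \sum_(j < (size t).+1) f (descents (insert_at j M t)) =
  (descents t).+1%:R * f (descents t) +
  ((size t)%:R - (descents t)%:R) * f (descents t).+1.
Proof.
elim: t f => [|x r IH] f; first by rewrite big_ord1 /= mul1r subrr mul0r addr0.
case/andP=> xM rM; have Mx : (M < x)%N = false by rewrite ltnNge ltnW.
rewrite (sum_ord_recl (fun j => f (descents (insert_at j M (x :: r))))) insert_at0.
case: r IH rM => [|y r] IH rM.
  rewrite (sum_ord_recl (fun j => f (descents (insert_at j.+1 M [:: x])))).
  by rewrite big_ord0 /insert_at /= xM Mx addr0 mul1r subr0 mul1r addrC.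
have yM : (y < M)%N by case/andP: rM.
set c := (y < x)%N; have {IH} := IH (fun d => f (c + d)%N) rM.
rewrite (sum_ord_recl (fun j => f (c + descents (insert_at j M (y :: r)))%N)).
rewrite insert_at0 descents_cons2 yM => IH.
rewrite (sum_ord_recl (fun j => f (descents (insert_at j.+1 M [:: x, y & r])))).
have -> : \sum_(i < (size r).+1) f (descents (insert_at i.+2 M [:: x, y & r]))
    = \sum_(i < (size r).+1) f (c + descents (insert_at i.+1 M (y :: r)))%N.
  by apply: eq_bigr => i _; rewrite descents_cons2.
rewrite (_ : insert_at 1 M [:: x, y & r] = [:: x, M, y & r]) //.
rewrite !descents_cons2 xM yM Mx.
rewrite -[\sum_(i < _) _](addKr (f (c + (true + descents (y :: r)))%N)) IH.
rewrite (_ : size (y :: r) = (size r).+1) // (_ : size [:: x, y & r] = (size r).+2) // /c.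
move: (descents (y :: r)) (size r) => D S.
by case: (y < x)%N; rewrite ?add0n !add1n -!natr1; ring.
Qed.

Lemma insert_max_permutations N :
  perm_eq (permutations (iota 0 N.+1))
          [seq insert_at j N t | t <- permutations (iota 0 N), j <- iota 0 N.+1].
Proof.
apply: uniq_min_size_perm; first exact: permutations_uniq.
  move=> u; rewrite mem_permutations => uP.
  have Nu : N \in u by rewrite (perm_mem uP) mem_iota add0n ltnSn.
  have uE : insert_at (index N u) N (rem N u) = u.
    rewrite remE /insert_at take_size_cat ?size_takel ?index_size //.
    rewrite drop_size_cat ?size_takel ?index_size //.
    by rewrite -[N in N :: _](nth_index 0 Nu) -drop_nth ?index_mem // cat_take_drop.
  rewrite -uE; apply: (allpairs_f (fun t j => insert_at j N t)).
    rewrite mem_permutations -(perm_cons N) -(permPl (perm_to_rem Nu)) (permPl uP).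
    by rewrite iotaS_rcons perm_rcons.
  by rewrite mem_iota -(size_iota 0 N.+1) -(perm_size uP) index_mem.
by rewrite size_allpairs !size_permutations ?iota_uniq // !size_iota factS mulnC.
Qed.

(* [negbin N d m] is the coefficient of x^m in x^d / (1 - x)^(N+1). *)
Definition negbin (N d m : nat) : int := ((d <= m) * 'C(m - d + N, N))%N%:R.

Lemma negbin_worpitzky_step N d m :
  d.+1%:R * negbin N.+1 d m + (N%:R - d%:R) * negbin N.+1 d.+1 m =
  m.+1%:R * negbin N d m.
Proof.
rewrite /negbin; case: (ltngtP d m) => [ltdm|ltmd|<-]; last 2 first.
- by rewrite !mul0n !mulr0 addr0.
- by rewrite subnn !add0n !binn mul0n mulr0 addr0 !mul1n.
have [K ->] : exists K, m = (d + K.+1)%N by exists (m - d).-1; lia.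
rewrite (_ : d + K.+1 - d = K.+1)%N; last by lia.
rewrite (_ : d + K.+1 - d.+1 = K)%N; last by lia.
rewrite !mul1n addSn binS addSnnS.
have := mul_bin_left (K + N.+1) N; rewrite (_ : K + N.+1 - N = K.+1)%N; last by lia.
set A := 'C(K + N.+1, N.+1); set B := 'C(K + N.+1, N) => pascal.
have pascalR : N.+1%:R * A%:R = K.+1%:R * B%:R :> int by rewrite -!natrM pascal.
transitivity (N.+1%:R * A%:R + d.+1%:R * B%:R : int); first by rewrite -!natr1; ring.
by rewrite pascalR -mulrDl -natrD; congr (_%:R * _); lia.
Qed.

Lemma worpitzky N m :
  \sum_(t <- permutations (iota 0 N)) negbin N (descents t) m = (m.+1 ^ N)%N%:R.
Proof.
elim: N => [|N IH]; first by rewrite big_seq1 /negbin bin0.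
rewrite (perm_big _ (insert_max_permutations N)) big_allpairs_dep.
rewrite expnS natrM -IH big_distrr !big_seq; apply: eq_bigr => t.
rewrite mem_permutations => tP.
have tN : all (fun y => y < N)%N t.
  by apply/allP => y; rewrite (perm_mem tP) mem_iota.
rewrite -[iota 0 N.+1]/(index_iota 0 N.+1) big_mkord.
have := sum_descents_insert_max (fun d => negbin N.+1 d m) tN.
rewrite (perm_size tP) size_iota => ->.
exact: negbin_worpitzky_step.
Qed.

Definition cyclic_descents (s : seq nat) : nat :=
  if s is x :: r then descents (x :: rcons r x) else 0%N.

Lemma descents_rcons y u z :
  descents (rcons (y :: u) z) = (descents (y :: u) + (z < last y u))%N.
Proof.
elim: u y => [|w u IH] y; first by rewrite /= addn0.
rewrite (_ : rcons [:: y, w & u] z = [:: y, w & rcons u z]) // descents_cons2.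
by rewrite -[w :: rcons u z]/(rcons (w :: u) z) IH descents_cons2 addnA.
Qed.

Lemma cyclic_descents_rot k s : cyclic_descents (rot k s) = cyclic_descents s.
Proof.
have rot1 t : cyclic_descents (rot 1 t) = cyclic_descents t.
  case: t => [|x [|y r]] //; rewrite rot1_cons rcons_cons /cyclic_descents.
  rewrite -rcons_cons descents_rcons last_rcons rcons_cons descents_cons2.
  by rewrite addnC.
elim: k => [|k IH]; first by rewrite rot0.
have [ltks|] := ltnP k (size s); first by rewrite rotS // rot1 IH.
by move=> leks; rewrite rot_oversize // ltnW.
Qed.

Lemma descents_map_succ t : descents (map succn t) = descents t.
Proof.
elim: t => [|x [|y t] IH] //.
by rewrite 2!map_cons !descents_cons2 -map_cons IH ltnS.
Qed.

Lemma cyclic_descents_cons0 t :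
  t != [::] -> cyclic_descents (0%N :: map succn t) = (descents t).+1.
Proof.
case: t => [|y t] // _.
rewrite /cyclic_descents map_cons rcons_cons descents_cons2 ltn0 add0n.
by rewrite -rcons_cons descents_rcons -map_cons descents_map_succ last_map addn1.
Qed.

Lemma rotate_zero_permutations N :
  perm_eq (permutations (iota 0 N.+1))
    [seq rotr c (0%N :: map succn t) | c <- iota 0 N.+1, t <- permutations (iota 0 N)].
Proof.
apply: uniq_min_size_perm; first exact: permutations_uniq.
  move=> u; rewrite mem_permutations => uP.
  have u0 : 0%N \in u by rewrite (perm_mem uP) mem_iota.
  have := rot_index u0; set c := index 0%N u; set r := (drop _ _ ++ _) => rot_u.
  have rP : perm_eq r (map succn (iota 0 N)).
    by rewrite -(iotaDl 1 0) -(perm_cons 0%N) -rot_u perm_rot.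
  have rE : map succn (map predn r) = r.
    by rewrite -map_comp map_id_in // => x; rewrite (perm_mem rP) => /mapP[y _ ->].
  rewrite -(rotK c u) rot_u -rE.
  apply: (allpairs_f (fun c t => rotr c (0%N :: map succn t))).
    by rewrite mem_iota -(size_iota 0 N.+1) -(perm_size uP) index_mem.
  by rewrite mem_permutations -[iota 0 N](mapK succnK) perm_map.
by rewrite size_allpairs !size_permutations ?iota_uniq // !size_iota factS.
Qed.

Lemma sum_cyclic_descents (R : nmodType) N (F : nat -> R) : (0 < N)%N ->
  \sum_(u <- permutations (iota 0 N.+1)) F (cyclic_descents u) =
  (\sum_(t <- permutations (iota 0 N)) F (descents t).+1) *+ N.+1.
Proof.
move=> N_gt0; rewrite (perm_big _ (rotate_zero_permutations N)) big_allpairs_dep.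
rewrite -[iota 0 N.+1]/(index_iota 0 N.+1) -[N.+1 in RHS]subn0 -sumr_const_nat.
apply: eq_bigr => c _.
rewrite !big_seq; apply: eq_bigr => t; rewrite mem_permutations => tP.
rewrite /rotr cyclic_descents_rot cyclic_descents_cons0 //.
by rewrite -size_eq0 (perm_size tP) size_iota -lt0n.
Qed.

Lemma negbinSS N d m : negbin N d.+1 m.+1 = negbin N d m.
Proof. by rewrite /negbin subSS. Qed.

Lemma cyclic_worpitzky N m :
  \sum_(u <- permutations (iota 0 N.+1)) negbin N (cyclic_descents u) m =
  (N.+1 * m ^ N)%N%:R.
Proof.
case: N => [|N]; first by rewrite big_seq1 /negbin bin0.
rewrite (sum_cyclic_descents (fun d => negbin N.+1 d m)) // natrM mulr_natl.
case: m => [|m]; last by under eq_bigr do rewrite negbinSS; rewrite worpitzky.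
by rewrite big1 ?exp0n ?mul0rn // => t _; rewrite /negbin.
Qed.

Lemma descents_nth s :
  descents s = (\sum_(i < (size s).-1) (nth 0 s i.+1 < nth 0 s i))%N.
Proof.
elim: s => [|x [|y r] IH]; rewrite ?big_ord0 //.
by rewrite descents_cons2 IH big_ord_recl.
Qed.

Lemma cyclic_descents_nth s : cyclic_descents s =
  (\sum_(i < size s) (nth 0 s (i.+1 %% size s) < nth 0 s i))%N.
Proof.
case: s => [|x r]; first by rewrite big_ord0.
rewrite /cyclic_descents descents_nth /= size_rcons.
apply: eq_bigr => -[i /= lt_i_r] _; rewrite ltnS in lt_i_r.
have nth_i : nth 0 (x :: rcons r x) i = nth 0 (x :: r) i.
  by case: i lt_i_r => [|i] lt_i_r //=; rewrite nth_rcons lt_i_r.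
rewrite nth_i nth_rcons; case: (ltngtP i (size r)) lt_i_r => // [lt_ir|->] _.
  by rewrite modn_small.
by rewrite modnn.
Qed.

Definition perm_seq n (s : 'S_n) : seq nat := [seq val (s i) | i <- enum 'I_n].

Lemma perm_seq_inj n : injective (@perm_seq n).
Proof.
move=> s s' /eq_in_map eq_ss'; apply/permP => i; apply: val_inj.
by apply: eq_ss'; rewrite mem_enum.
Qed.

Lemma perm_seq_iota n (s : 'S_n) : perm_eq (perm_seq s) (iota 0 n).
Proof.
rewrite /perm_seq -val_enum_ord (map_comp val s); apply: perm_map.
apply: uniq_perm; [by rewrite (map_inj_uniq (@perm_inj _ s)) enum_uniq|exact: enum_uniq|].
by move=> i; rewrite mem_enum; apply/mapP; exists (s^-1%g i); rewrite ?mem_enum ?permKV.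
Qed.

Lemma sum_perm_seq (R : nmodType) n (F : seq nat -> R) :
  \sum_(s : 'S_n) F (perm_seq s) = \sum_(t <- permutations (iota 0 n)) F t.
Proof.
rewrite -(big_map (@perm_seq n) xpredT); apply: perm_big.
apply: uniq_min_size_perm; first by rewrite (map_inj_uniq (@perm_seq_inj n)) index_enum_uniq.
  by move=> t /mapP[s _ ->]; rewrite mem_permutations perm_seq_iota.
by rewrite size_map size_permutations ?iota_uniq // size_iota -card_Sn cardT enumT.
Qed.

Lemma cyclic_descents_perm_seq n (s : 'S_n.+1) :
  cyclic_descents (perm_seq s) = (\sum_(i < n.+1) (s (ordS i) < s i))%N.
Proof.
have size_s : size (perm_seq s) = n.+1 by rewrite size_map size_enum_ord.
have nth_s k : (k < n.+1)%N -> nth 0%N (perm_seq s) k = val (s (inord k)).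
  move=> lt_kn; rewrite (nth_map ord0) ?size_enum_ord //.
  by congr (val (s _)); apply: val_inj; rewrite /= nth_enum_ord // inordK.
rewrite cyclic_descents_nth size_s; apply: eq_bigr => i _.
rewrite !nth_s ?ltn_pmod // inord_val.
by congr (val (s _) < _)%N; apply: val_inj; rewrite /= inordK // ltn_pmod.
Qed.

Lemma dfs_outdeg_Tour_Cycle_inv n (s : 'S_n.+1) :
  dfs_outdeg (Tour n.+1) (Cycle n.+1) s^-1 = (\sum_(i < n.+1) (s (ordS i) < s i))%N.
Proof.
rewrite /dfs_outdeg (reindex_inj (@perm_inj _ s)); apply: eq_bigr => i _.
rewrite (reindex_inj (@perm_inj _ s)) big_mkcond (bigD1 (ordS i)) //= big1 ?addn0.
  by rewrite /Tour /Cycle !permK eqxx muln1; case: eqP => // ->; rewrite ltnn.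
move=> j ne_j_ordS; rewrite /Cycle !permK.
by rewrite -[((val i).+1 %% n.+1)%N]/(val (ordS i)) val_eqE (negbTE ne_j_ordS) muln0 if_same.
Qed.

Lemma sum_dfs_outdeg_Tour_Cycle (R : nmodType) n (F : nat -> R) :
  \sum_(s : 'S_n.+1) F (dfs_outdeg (Tour n.+1) (Cycle n.+1) s) =
  \sum_(u <- permutations (iota 0 n.+1)) F (cyclic_descents u).
Proof.
rewrite (reindex_inj invg_inj) -sum_perm_seq; apply: eq_bigr => s _.
by rewrite dfs_outdeg_Tour_Cycle_inv cyclic_descents_perm_seq.
Qed.

Section PartialSums.
Variable R : zmodType.
Implicit Types u : nat -> R.

Definition partial_sums u m : R := \sum_(k < m.+1) u k.

Definition differences u k : R := u k - (if k is k'.+1 then u k' else 0).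

Lemma partial_sumsK : cancel partial_sums differences.
Proof.
move=> u; apply: functional_extensionality => -[|k].
  by rewrite /differences /partial_sums big_ord1 subr0.
by rewrite /differences /partial_sums big_ord_recr addrC addKr.
Qed.

Lemma iter_partial_sumsK r : cancel (iter r partial_sums) (iter r differences).
Proof. by elim: r => [|r IH] u //; rewrite iterSr iterS partial_sumsK IH. Qed.

Lemma iter_partial_sums_sum (I : finType) (F : I -> nat -> R) r :
  iter r partial_sums (fun k => \sum_i F i k) =
  (fun m => \sum_i iter r partial_sums (F i) m).
Proof.
elim: r => [|r IH] //; apply: functional_extensionality => m.
by rewrite !iterS IH /partial_sums exchange_big.
Qed.

End PartialSums.

Lemma coef_1subX_exp_poly (R : nzRingType) (h : nat -> R) r K k : (k < K)%N ->
  ((1 - 'X) ^+ r * \poly_(m < K) h m)`_k = iter r (@differences R) h k.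
Proof.
elim: r k => [|r IH] k lt_kK; first by rewrite mul1r coef_poly lt_kK.
rewrite exprS -mulrA mulrBl mul1r coefB coefXM iterS /differences IH //.
by case: k lt_kK => [|k] lt_kK //=; rewrite IH // ltnW.
Qed.

Lemma partial_sums_negbin N d : partial_sums (negbin N d) = negbin N.+1 d.
Proof.
apply: functional_extensionality => m; rewrite /partial_sums.
elim: m => [|m IH]; first by rewrite big_ord1; case: d => [|d]; rewrite /negbin ?binn.
rewrite big_ord_recr /= IH /negbin -natrD; congr _%:R.
case: (ltngtP d m.+1) => [lt_dm|lt_md|->].
- rewrite ltnS in lt_dm.
  by rewrite lt_dm !mul1n subSn // [in RHS]addSn binS addSnnS.
- by rewrite (leqNgt d m) (ltnW lt_md).
- by rewrite ltnn subnn !binn.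
Qed.

Lemma iter_partial_sums_delta N d :
  iter N.+1 (@partial_sums int) (fun k => (k == d)%:R) = negbin N d.
Proof.
elim: N => [|N IH]; last by rewrite iterS IH partial_sums_negbin.
apply: functional_extensionality => m; rewrite /= /partial_sums /negbin addn0 bin0 muln1.
elim: m => [|m IH]; first by rewrite big_ord1; case: d.
rewrite big_ord_recr /= IH; case: (ltngtP d m.+1) => [lt_dm|lt_md|->].
- by rewrite -ltnS lt_dm addr0.
- by rewrite leqNgt ltnW // addr0.
- by rewrite ltnn add0r.
Qed.

Lemma partial_sums_coef_ODP_Tour_Cycle N :
  iter N.+1 (@partial_sums int) (fun k => (ODP (Tour N.+1) (Cycle N.+1))`_k) =
  (fun m => (N.+1 * m ^ N)%N%:Z).
Proof.
have -> : (fun k => (ODP (Tour N.+1) (Cycle N.+1))`_k) =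
    (fun k => \sum_(s : 'S_N.+1) (k == dfs_outdeg (Tour N.+1) (Cycle N.+1) s)%:R).
  by apply: functional_extensionality => k; rewrite coef_sum; apply: eq_bigr => s _; rewrite coefXn.
rewrite iter_partial_sums_sum; apply: functional_extensionality => m.
under eq_bigr do rewrite iter_partial_sums_delta.
by rewrite (sum_dfs_outdeg_Tour_Cycle _ (fun d => negbin N d m)) cyclic_worpitzky natz.
Qed.

Theorem mainTheorem14 (n : nat) : (0 < n)%N ->
  forall k : nat,
    (ODP (Tour n) (Cycle n))`_k =
    ((1 - 'X) ^+ n * \poly_(m < k.+1) ((n * m ^ (n - 1))%N)%:Z)`_k.
Proof.
case: n => [|N] // _ k.
by rewrite coef_1subX_exp_poly // subn1 -partial_sums_coef_ODP_Tour_Cycle iter_partial_sumsK.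
Qed.
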